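(* Let $\mathbb{N}$ be a directed graph on vertices $\{1,\dots,m\}$ and let $\mathcal{J}$ be the set of its arcs, written as double indices $ij$ (meaning the arc from $j$ to $i$), i.e. $\mathcal{J}=\{ij: i\in\{1,\dots,m\},\ j\in\bar{\mathcal{N}}_i\}$ where $\bar{\mathcal{N}}_i$ is the set of $j\neq i$ with an arc from $j$ to $i$. For $ij\in\mathcal{J}$ let $c_{ij}\in\mathbb{R}^{1\times m}$ have entry $-1$ in position $i$, $+1$ in position $j$ and zeros elsewhere, and let $b_i$ be the $i$-th unit vector of $\mathbb{R}^m$. Let $\mathbb{G}$ be the directed graph with vertex set $\mathcal{J}$ and an arc from vertex $ij$ to vertex $kq$ whenever $c_{kq}(sI)^{-1}b_i\neq 0$ (equivalently $c_{kq}b_i\neq 0$). If $\mathbb{N}$ is strongly connected, then $\mathbb{G}$ is strongly connected.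
   Context: $c_{ij}$ is the row of the transpose of the incidence matrix of $\mathbb{N}$ corresponding to the arc from $j$ to $i$. *)

From mathcomp Require Import all_boot all_order all_algebra.
From mathcomp Require Import reals.
Set Implicit Arguments. Unset Strict Implicit. Unset Printing Implicit Defensive.
Import Order.TTheory GRing.Theory Num.Theory.
Local Open Scope ring_scope.

(* A directed graph on vertices 'I_m is a relation e : rel 'I_m,
   where  e j i  means there is an arc from j to i. *)

Definition strongly_connected (T : finType) (r : rel T) : Prop :=
  forall x y : T, connect r x y.

(* Nbar_i = { j <> i | arc from j to i }; the arc set J consists of the
   double indices ij = (i, j) with j in Nbar_i. *)
Definition in_J (m : nat) (e : rel 'I_m) (p : 'I_m * 'I_m) : bool :=
  (p.2 != p.1) && e p.2 p.1.

Definition arcs (m : nat) (e : rel 'I_m) : finType :=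
  {p : 'I_m * 'I_m | in_J e p}.

Definition cvec (R : realType) (m : nat) (i j : 'I_m) : 'rV[R]_m :=
  \row_k ((k == j)%:R - (k == i)%:R).

Definition bvec (R : realType) (m : nat) (i : 'I_m) : 'cV[R]_m :=
  \col_k (k == i)%:R.

Definition Grel (R : realType) (m : nat) (e : rel 'I_m) : rel (arcs e) :=
  fun x y => (cvec R (val y).1 (val y).2 *m bvec R (val x).1) != 0.
Arguments Grel R {m} e _ _.

(** Since [c_kq b_i = [i = q] - [i = k]] and [k <> q], the graph G has an arc
    from [ij] to [kq] exactly when [i] is an endpoint of [kq]; in particular
    from [ij] to every arc [k i] leaving vertex [i] of N.  Hence a walk
    [v0 -> v1 -> ... -> vn] in N starting at the head [v0 = i] of [x = ij]
    lifts to the walk [x -> v1 v0 -> v2 v1 -> ... -> vn v(n-1)] in G, so every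
    vertex of N is the head of some arc reachable from [x] in G.  Choosing the
    vertex to be the tail [q] of a target [y = kq] gives one more G-step to [y]. *)
From mathcomp Require Import all_boot all_order all_algebra.
From mathcomp Require Import reals.
Set Implicit Arguments. Unset Strict Implicit. Unset Printing Implicit Defensive.
Import Order.TTheory GRing.Theory Num.Theory.
Local Open Scope ring_scope.

Lemma forward_closed_connect (T : finType) (r : rel T) (a : pred T) x y :
  (forall u v, r u v -> u \in a -> v \in a) -> connect r x y -> x \in a -> y \in a.
Proof.
move=> a_closed /connectP [p xp ->] {y}.
by elim: p x xp => [|z p IHp] x //= /andP [rxz zp] ax; apply: IHp zp (a_closed _ _ rxz ax).
Qed.

Lemma cvec_mul_bvec (R : realType) (m : nat) (i j k : 'I_m) :
  cvec R i j *m bvec R k = ((k == j)%:R - (k == i)%:R)%:M.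
Proof.
rewrite [LHS]mx11_scalar mxE (bigD1 k) //= big1 => [|l /negbTE lk].
  by rewrite !mxE eqxx mulr1 addr0.
by rewrite !mxE lk mulr0.
Qed.

Lemma indicator_diff_eq0 (R : numDomainType) (T : eqType) (i j k : T) : j != i ->
  (((k == j)%:R - (k == i)%:R : R) == 0) = (k != i) && (k != j).
Proof.
move=> ji; rewrite subr_eq0 eqr_nat.
by have [->|_] := eqVneq k i; [rewrite [i == j]eq_sym (negbTE ji) | case: (k == j)].
Qed.

Section ArcGraph.

Variables (R : realType) (m : nat) (e : rel 'I_m).

Lemma arc_neq (x : arcs e) : (val x).2 != (val x).1.
Proof. by case/andP: (valP x). Qed.

Lemma GrelE (x y : arcs e) :
  Grel R e x y = ((val x).1 == (val y).1) || ((val x).1 == (val y).2).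
Proof.
rewrite /Grel cvec_mul_bvec fmorph_eq0 indicator_diff_eq0 ?arc_neq //.
by rewrite negb_and !negbK.
Qed.

Definition heads_reachable_from (x : arcs e) : pred 'I_m :=
  [pred v | [exists z : arcs e, ((val z).1 == v) && connect (Grel R e) x z]].

Lemma heads_reachable_from_closed (x : arcs e) u v :
  e u v -> u \in heads_reachable_from x -> v \in heads_reachable_from x.
Proof.
move=> euv /existsP [z /andP [/eqP zu xz]].
have [-> | vu] := eqVneq v u; first by apply/existsP; exists z; rewrite zu eqxx.
have Jvu : in_J e (v, u) by rewrite /in_J /= eq_sym vu.
apply/existsP; exists (exist _ (v, u) Jvu); rewrite eqxx /=.
by apply: connect_trans xz (connect1 _); rewrite GrelE zu eqxx orbT.
Qed.

End ArcGraph.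

Theorem lemma1 (R : realType) (m : nat) (e : rel 'I_m) :
  strongly_connected e -> strongly_connected (Grel R e).
Proof.
move=> scN x y.
have : (val y).2 \in heads_reachable_from R x.
  apply: forward_closed_connect (scN (val x).1 _) _.
    exact: heads_reachable_from_closed.
  by apply/existsP; exists x; rewrite eqxx connect0.
case/existsP => z /andP [/eqP zy xz].
by apply: connect_trans xz (connect1 _); rewrite GrelE zy eqxx orbT.
Qed.
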